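(* For each $m \ge 2$ let $(r_m,p_m,s_m)$ be the probabilities of playing $R,P,S$ in a symmetric Nash equilibrium of the imbalanced $(m,3)$-RPS. Then as $m\to\infty$, $\max(r_m,p_m,s_m) \to 1$ (and the other two probabilities tend to $0$); that is, the symmetric Nash equilibrium probability vectors converge, up to permutation of coordinates, to a point mass, which majorizes every probability vector on three objects.
   Context: An $(m,n)$-RPS game is a symmetric, zero-sum, win/lose game with $m$ players and $n$ pure strategies (''objects''), played without collusion. The rules assign to every multiset $c$ of $m$ chosen objects a single winning object $\phi(c)\in c$; every player who chose $\phi(c)$ wins and every other player loses. If there are $m'$ winners, each winner receives payoff $\frac{m-m'}{m'}$ and each loser receives payoff $-1$. A symmetric Nash equilibrium is a mixed-strategy Nash equilibrium in which all players use the same probability distribution over objects. The imbalanced $(m,3)$-RPS has objects $R,P,S$ with the following rules: any multiset containing at least one $S$ and at least one $R$ is won by $R$; any multiset containing only $R$'s and $P$'s (with at least one of each) is won by $P$; any multiset containing only $P$'s and $S$'s (with at least one of each) is won by $S$; a multiset consisting of a single object type is won by that object. *)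

From HB Require Import structures.
From mathcomp Require Import all_boot all_order all_algebra.
From mathcomp Require Import all_classical all_reals all_analysis.
Set Implicit Arguments. Unset Strict Implicit. Unset Printing Implicit Defensive.
Import Order.TTheory GRing.Theory Num.Theory.
Local Open Scope ring_scope.

Definition obR : 'I_3 := @Ordinal 3 0 isT.
Definition obP : 'I_3 := @Ordinal 3 1 isT.
Definition obS : 'I_3 := @Ordinal 3 2 isT.

Definition profile (m : nat) := {ffun 'I_m -> 'I_3}.

Definition cnt (m : nat) (c : profile m) (k : 'I_3) : nat :=
  #|[set i | c i == k]|.

Definition winner (m : nat) (c : profile m) : 'I_3 :=
  let hasR := (0 < cnt c obR)%N in
  let hasP := (0 < cnt c obP)%N in
  let hasS := (0 < cnt c obS)%N in
  if hasS && hasR then obR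
  else if hasR && hasP then obP
  else if hasP && hasS then obS
  else if hasR then obR
  else if hasP then obP
  else obS.

Definition payoff (R : realType) (m : nat) (c : profile m) (i : 'I_m) : R :=
  let w := winner c in
  let m' := cnt c w in
  if c i == w then (m - m')%:R / m'%:R else -1.

Definition is_mixed (R : realType) (s : 'I_3 -> R) : Prop :=
  (forall k, 0 <= s k) /\ \sum_k s k = 1.

Definition exp_payoff (R : realType) (m : nat) (i : 'I_m)
    (tau sigma : 'I_3 -> R) : R :=
  \sum_(c : profile m)
     (tau (c i) * \prod_(j < m | j != i) sigma (c j)) * payoff R c i.

Definition symNE (R : realType) (m : nat) (sigma : 'I_3 -> R) : Prop :=
  is_mixed sigma /\
  forall (i : 'I_m) (tau : 'I_3 -> R), is_mixed tau ->
    exp_payoff i tau sigma <= exp_payoff i sigma sigma.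

From HB Require Import structures.
From mathcomp Require Import all_boot all_order all_algebra.
From mathcomp Require Import all_classical all_reals all_analysis.
From mathcomp Require Import zify lra.
Import Order.TTheory GRing.Theory Num.Theory.
Import numFieldNormedType.Exports.
Local Open Scope classical_set_scope.
Local Open Scope ring_scope.

(* In a symmetric equilibrium sigma of this symmetric zero-sum game every
   player's expected payoff is 0.  Summing over the players, sigma_k times the
   payoff of deviating to the pure object k equals m (W_k - sigma_k), where
   W_k is the probability that k wins; so W_k <= sigma_k, and as both sum to 1,
   W = sigma.  For the imbalanced rules W_S = (p+s)^m - p^m and
   W_P = (r+p)^m - r^m.  Bounding a^m - b^m by (a - b) m a^(m-1), the equation
   s = W_S gives 1 <= m (1-r)^(m-1), hence (1+r)^(m-1) <= m and
   r = O(m^(-1/2)); the equation p = W_P forces r + p > 1/2, hence s <= 2r.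
   Therefore 1 - max(r,p,s) <= 3r = O(m^(-1/2)). *)

Section ProductWeights.
Variables (T : finType) (R : comNzRingType) (m : nat) (w : T -> R).

Lemma sum_prod_forall (A : pred T) :
  \sum_(c : {ffun 'I_m -> T}) (\prod_j w (c j)) * [forall j, A (c j)]%:R
  = (\sum_(x | A x) w x) ^+ m.
Proof.
transitivity (\prod_(j < m) \sum_x (if A x then w x else 0)); last first.
  by rewrite prodr_const card_ord -big_mkcond.
rewrite bigA_distr_bigA /=.
apply: eq_bigr => c _; case: (boolP [forall j, A (c j)]) => [/forallP allA|].
  by rewrite mulr1; apply: eq_bigr => j _; rewrite allA.
rewrite negb_forall mulr0 => /existsP[j notA].
by rewrite (bigD1 j) //= (negbTE notA) mul0r.
Qed.

Hypothesis w_sum1 : \sum_x w x = 1.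

Lemma sum_prod1 : \sum_(c : {ffun 'I_m -> T}) \prod_j w (c j) = 1.
Proof. by rewrite -(bigA_distr_bigA (fun _ => w)) big1. Qed.

Lemma sum_prod_marginal i k :
  \sum_(c : {ffun 'I_m -> T}) (\prod_j w (c j)) * (c i == k)%:R = w k.
Proof.
pose F j x := w x * (if j == i then (x == k)%:R else 1).
transitivity (\sum_(c : {ffun 'I_m -> T}) \prod_j F j (c j)).
  apply: eq_bigr => c _; rewrite /F big_split /= [X in _ = _ * X](bigD1 i) //=.
  by rewrite eqxx [X in _ * (_ * X)]big1 ?mulr1 // => j /negbTE ->.
rewrite -(bigA_distr_bigA F) (bigD1 i) //= [X in _ * X]big1 => [|j /negbTE ji].
  rewrite mulr1 /F eqxx (bigD1 k) //= eqxx mulr1 big1 ?addr0 // => x /negbTE ->.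
  by rewrite mulr0.
by rewrite /F; under eq_bigr do rewrite ji mulr1.
Qed.

End ProductWeights.

Lemma sum_prod_exists_absent (T : finType) (R : comNzRingType) (m : nat)
    (w : T -> R) (a b : T) :
  \sum_(c : {ffun 'I_m -> T})
     (\prod_j w (c j)) * ([exists j, c j == a] && ~~ [exists j, c j == b])%:R
  = (\sum_(x | x != b) w x) ^+ m - (\sum_(x | (x != a) && (x != b)) w x) ^+ m.
Proof.
rewrite -!sum_prod_forall -sumrB; apply: eq_bigr => c _; rewrite -mulrBr.
have -> : [forall j, (c j != a) && (c j != b)]
          = ~~ [exists j, c j == a] && ~~ [exists j, c j == b].
  rewrite !negb_exists; apply/forallP/andP => [allab|[/forallP na /forallP nb] j].
    by split; apply/forallP => j; have /andP[] := allab j.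
  by rewrite na nb.
rewrite -negb_exists.
by case: [exists j, _]; case: [exists j, _]; rewrite /= ?subr0 ?subrr.
Qed.

Lemma sum_eq_natr (T : finType) (R : nzSemiRingType) (a : T) :
  \sum_k (a == k)%:R = 1 :> R.
Proof.
rewrite (bigD1 a) //= eqxx big1 ?addr0 // => k.
by rewrite eq_sym => /negbTE ->.
Qed.

Lemma sum_ord3 (R : nmodType) (f : 'I_3 -> R) :
  \sum_x f x = f obR + f obP + f obS.
Proof.
rewrite !big_ord_recl big_ord0 addr0 addrA.
by congr (f _ + f _ + f _); apply: val_inj.
Qed.

Section ImbalancedRPS.
Context {R : realType} {m : nat}.
Hypothesis m_gt0 : (0 < m)%N.
Implicit Types (c : profile m) (sg : 'I_3 -> R) (k : 'I_3).

Definition pure k : 'I_3 -> R := fun x => (k == x)%:R.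

Definition win_prob sg k : R :=
  \sum_(c : profile m) (\prod_j sg (c j)) * (winner c == k)%:R.

Lemma cnt_gt0 c k : (0 < cnt c k)%N = [exists j, c j == k].
Proof. by apply/card_gt0P/existsP => -[j]; exists j; rewrite inE in p *. Qed.

Lemma cnt_natr c k : (cnt c k)%:R = \sum_i (c i == k)%:R :> R.
Proof.
rewrite /cnt -sum1dep_card natr_sum big_mkcond /=.
by apply: eq_bigr => i _; case: (c i == k).
Qed.

Lemma sum_cnt c : \sum_k (cnt c k)%:R = m%:R :> R.
Proof.
under eq_bigr do rewrite cnt_natr.
rewrite exchange_big /=; under eq_bigr do rewrite sum_eq_natr.
by rewrite sumr_const card_ord.
Qed.

Lemma present_some c :
  [|| [exists j, c j == obR], [exists j, c j == obP] | [exists j, c j == obS]].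
Proof.
pose i0 := Ordinal m_gt0.
have : [|| c i0 == obR, c i0 == obP | c i0 == obS] by case: (c i0) => [[|[|[|]]]].
by case/or3P => present; apply/or3P; [constructor 1|constructor 2|constructor 3];
  apply/existsP; exists i0.
Qed.

Ltac winner_cases c :=
  have := present_some c; rewrite /winner !cnt_gt0;
  case hR : [exists j, c j == obR]; case hP : [exists j, c j == obP];
  case hS : [exists j, c j == obS].

Lemma winner_cnt_gt0 c : (0 < cnt c (winner c))%N.
Proof. by winner_cases c. Qed.

Lemma winner_eqS c :
  (winner c == obS) = [exists j, c j == obS] && ~~ [exists j, c j == obR].
Proof. by winner_cases c. Qed.

Lemma winner_eqP c :
  (winner c == obP) = [exists j, c j == obP] && ~~ [exists j, c j == obS].
Proof. by winner_cases c. Qed.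

Lemma sum_payoff_at c k :
  \sum_i (c i == k)%:R * payoff R c i = m%:R * (winner c == k)%:R - (cnt c k)%:R.
Proof.
rewrite /payoff; have [->|kNw] := eqVneq k (winner c).
  set n := cnt c (winner c).
  have n_gt0 : n%:R != 0 :> R by rewrite pnatr_eq0 -lt0n winner_cnt_gt0.
  transitivity (n%:R * ((m - n)%:R / n%:R) : R).
    rewrite cnt_natr mulr_suml; apply: eq_bigr => i _.
    by case: eqP; rewrite ?mul0r ?mul1r.
  rewrite mulrCA mulfV // !mulr1 natrB //.
  by apply: leq_trans (max_card _) _; rewrite card_ord.
rewrite mulr0n mulr0 sub0r (cnt_natr c k) -sumrN; apply: eq_bigr => i _.
by case: eqP => [->|]; rewrite ?(negbTE kNw) ?mul1r ?mul0r ?oppr0.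
Qed.

Lemma sum_payoff c : \sum_i payoff R c i = 0.
Proof.
transitivity (\sum_i \sum_k (c i == k)%:R * payoff R c i).
  by apply: eq_bigr => i _; rewrite -mulr_suml sum_eq_natr mul1r.
rewrite exchange_big /=; under eq_bigr do rewrite sum_payoff_at.
by rewrite sumrB -mulr_sumr sum_eq_natr mulr1 sum_cnt subrr.
Qed.

Lemma exp_payoff_self sg i :
  exp_payoff i sg sg = \sum_(c : profile m) (\prod_j sg (c j)) * payoff R c i.
Proof. by apply: eq_bigr => c _; rewrite [in RHS](bigD1 i). Qed.

Lemma exp_payoff_pure sg i k :
  sg k * exp_payoff i (pure k) sg
  = \sum_(c : profile m) (\prod_j sg (c j)) * ((c i == k)%:R * payoff R c i).
Proof.
rewrite mulr_sumr; apply: eq_bigr => c _; rewrite [in RHS](bigD1 i) //= /pure.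
by have [->|_] := eqVneq (c i) k; rewrite ?mul0r ?mulr0 // !mul1r mulrA.
Qed.

Lemma sum_exp_payoff_self sg : \sum_(i < m) exp_payoff i sg sg = 0.
Proof.
under eq_bigr do rewrite exp_payoff_self.
rewrite exchange_big big1 // => c _.
by rewrite -mulr_sumr sum_payoff mulr0.
Qed.

Lemma sum_exp_payoff_pure sg k : \sum_x sg x = 1 ->
  \sum_(i < m) sg k * exp_payoff i (pure k) sg = m%:R * (win_prob sg k - sg k).
Proof.
move=> sg_sum1; under eq_bigr do rewrite exp_payoff_pure.
rewrite exchange_big /=.
under eq_bigr do rewrite -mulr_sumr sum_payoff_at mulrBr.
rewrite sumrB mulrBr /win_prob mulr_sumr; congr (_ - _).
  by apply: eq_bigr => c _; rewrite mulrCA.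
under eq_bigr do rewrite cnt_natr mulr_sumr.
rewrite exchange_big /=; under eq_bigr do rewrite sum_prod_marginal //.
by rewrite sumr_const card_ord mulr_natl.
Qed.

Lemma symNE_win_prob_le sg k : symNE m sg -> win_prob sg k <= sg k.
Proof.
move=> [[sg_ge0 sg_sum1] sgNE].
have pure_mixed : is_mixed (pure k).
  by split=> [x|]; [exact: ler0n | exact: sum_eq_natr].
have : \sum_(i < m) sg k * exp_payoff i (pure k) sg
       <= \sum_(i < m) sg k * exp_payoff i sg sg.
  by apply: ler_sum => i _; rewrite ler_wpM2l // sgNE.
rewrite sum_exp_payoff_pure // -mulr_sumr sum_exp_payoff_self mulr0.
by rewrite pmulr_rle0 ?ltr0n // subr_le0.
Qed.

Lemma sum_win_prob sg : \sum_x sg x = 1 -> \sum_k win_prob sg k = 1.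
Proof.
move=> sg_sum1; rewrite exchange_big /=.
under eq_bigr do rewrite -mulr_sumr sum_eq_natr mulr1.
exact: sum_prod1.
Qed.

Lemma symNE_win_prob sg k : symNE m sg -> win_prob sg k = sg k.
Proof.
move=> sgNE; have [[_ sg_sum1] _] := sgNE.
have sum0 : \sum_x (sg x - win_prob sg x) = 0.
  by rewrite sumrB sg_sum1 sum_win_prob ?subrr.
apply/eqP; rewrite eq_sym -subr_eq0; apply/eqP.
by apply: (psumr_eq0P _ sum0) => // x _; rewrite subr_ge0 symNE_win_prob_le.
Qed.

Lemma win_probS sg : win_prob sg obS = (sg obP + sg obS) ^+ m - sg obP ^+ m.
Proof.
rewrite /win_prob; under eq_bigr do rewrite winner_eqS.
rewrite sum_prod_exists_absent.
by rewrite big_mkcond sum_ord3 big_mkcond sum_ord3 /= add0r !addr0.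
Qed.

Lemma win_probP sg : win_prob sg obP = (sg obR + sg obP) ^+ m - sg obR ^+ m.
Proof.
rewrite /win_prob; under eq_bigr do rewrite winner_eqP.
rewrite sum_prod_exists_absent.
by rewrite big_mkcond sum_ord3 big_mkcond sum_ord3 /= !addr0.
Qed.

End ImbalancedRPS.

Lemma subrXX_le {R : numDomainType} (a b : R) n : 0 <= b <= a ->
  a ^+ n - b ^+ n <= (a - b) * (n%:R * a ^+ n.-1).
Proof.
move=> /andP[b_ge0 ba]; have a_ge0 := le_trans b_ge0 ba.
rewrite subrXX ler_wpM2l ?subr_ge0 // mulr_natl.
rewrite -[X in _ *+ X](card_ord n) -sumr_const.
apply: ler_sum => i _; have i_lt := ltn_ord i.
have -> : a ^+ n.-1 = a ^+ (n.-1 - i) * a ^+ i by rewrite -exprD subnK //; lia.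
by rewrite ler_wpM2l ?exprn_ge0 // lerXn2r.
Qed.

Lemma expr_eq_id {R : numDomainType} (x : R) n : (1 < n)%N -> 0 <= x ->
  x ^+ n = x -> x = 0 \/ x = 1.
Proof.
move=> n_gt1 x_ge0; case: n n_gt1 => // n n_gt0; rewrite exprS => e.
have [->|x_neq0] := eqVneq x 0; [by left | right].
apply/eqP; rewrite -(pexpr_eq1 n_gt0 x_ge0); apply/eqP.
by apply: (mulfI x_neq0); rewrite e mulr1.
Qed.

Lemma succn_lt_exp2 n : (1 < n)%N -> (n.+1 < 2 ^ n)%N.
Proof.
elim: n => [//|n IH]; case: n IH => [//|[//|n]] IH _.
rewrite expnS; have := IH isT; lia.
Qed.

Lemma bin2_mul2 n : ('C(n, 2) * 2 = n * n.-1)%N.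
Proof.
elim: n => [//|n IH]; rewrite binS bin1 mulnDl IH; case: n {IH} => //= n; lia.
Qed.

Lemma bin2_le_exprD1 {R : numDomainType} (r : R) n : 0 <= r ->
  (n * n.-1)%:R * r ^+ 2 <= 2 * (1 + r) ^+ n.
Proof.
move=> r_ge0; case: n => [|[|n]];
  rewrite ?mul0r ?mulr_ge0 ?exprn_ge0 ?addr_ge0 //.
rewrite addrC exprD1n (bigD1 (@Ordinal n.+3 2 isT)) //= -bin2_mul2 natrM.
rewrite mulrAC [_ * 2]mulrC ler_pM2l ?ltr0n // mulr_natl lerDl sumr_ge0 // => i _.
by rewrite mulrn_wge0 // exprn_ge0.
Qed.

Lemma subrXX_eq_ge1 {R : numDomainType} (a b : R) n : 0 <= b < a ->
  a ^+ n - b ^+ n = a - b -> 1 <= n%:R * a ^+ n.-1.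
Proof.
move=> /andP[b_ge0 ba] eq_ab; have : 0 <= b <= a by rewrite b_ge0 ltW.
by move/(subrXX_le a b n); rewrite eq_ab -{1}[a - b]mulr1 ler_pM2l ?subr_gt0.
Qed.

Lemma natr_exprn_half_lt1 {R : realFieldType} (x : R) n : (3 <= n)%N ->
  0 <= x <= 2^-1 -> n%:R * x ^+ n.-1 < 1.
Proof.
move=> n_ge3 /andP[x_ge0 x_half].
have two_x : (2 * x) ^+ n.-1 <= 1 by apply: exprn_ile1; lra.
have n_lt : n%:R < 2 ^+ n.-1 :> R.
  by rewrite -natrX ltr_nat -{1}(prednK (_ : 0 < n)%N) ?succn_lt_exp2 //; lia.
rewrite -(ltr_pM2l (_ : 0 < 2 ^+ n.-1)) ?exprn_gt0 // mulr1 mulrCA -exprMn.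
by apply: le_lt_trans n_lt; rewrite ler_piMr.
Qed.

Lemma exprD1_le {R : realFieldType} (r c : R) k : 0 <= r <= 1 ->
  1 <= c * (1 - r) ^+ k -> (1 + r) ^+ k <= c.
Proof.
move=> /andP[r_ge0 r_le1] one_le.
have pow_ge0 : 0 <= (1 - r) ^+ k by rewrite exprn_ge0 // subr_ge0.
have c_ge0 : 0 <= c by rewrite leNgt; apply/negP => c_lt0; nra.
apply: le_trans (_ : (1 + r) ^+ k * (c * (1 - r) ^+ k) <= _).
  by rewrite ler_peMr ?exprn_ge0 //; lra.
by rewrite mulrCA -exprMn ler_piMr // exprn_ile1 //; nra.
Qed.

Lemma sqr_le_of_exprD1_le {R : realFieldType} (r : R) n : (3 <= n)%N -> 0 <= r ->
  (1 + r) ^+ n.-1 <= n%:R -> (n%:R - 2) * r ^+ 2 <= 3.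
Proof.
case: n => [|[|[|k]]] // _ r_ge0 pow_le; have := bin2_le_exprD1 r k.+2 r_ge0.
rewrite /= -[k.+3]addn3 -[k.+2]addn2 -[k.+1]addn1 !natrM !natrD in pow_le *.
have k_ge0 : 0 <= k%:R :> R by [].
nra.
Qed.

Section WinEquations.
Context {R : realFieldType} {m : nat} {r p s : R}.

Lemma win_equations_degenerate : (1 < m)%N -> 0 <= r -> 0 <= s -> r + p + s = 1 ->
  s = (p + s) ^+ m - p ^+ m -> p = (r + p) ^+ m - r ^+ m ->
  s = 0 \/ p = 0 -> [\/ r = 1, p = 1 | s = 1].
Proof.
move=> m_gt1 r_ge0 s_ge0 rps1 s_win p_win [s0|p0].
  have : r ^+ m = r by move: p_win; rewrite (_ : r + p = 1) ?expr1n; lra.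
  by case/expr_eq_id => // r_eq; [constructor 2|constructor 1]; lra.
have : s ^+ m = s by move: s_win; rewrite p0 add0r expr0n -(subnKC m_gt1) /=; lra.
by case/expr_eq_id => // s_eq; [constructor 1|constructor 3]; lra.
Qed.

Lemma win_equations_s_le_2r : (3 <= m)%N -> 0 <= r -> 0 < p -> 0 <= s ->
  r + p + s = 1 -> p = (r + p) ^+ m - r ^+ m -> s <= 2 * r.
Proof.
move=> m_ge3 r_ge0 p_gt0 s_ge0 rps1 p_win.
have rp_half : 2^-1 < r + p.
  rewrite ltNge; apply/negP => rp_le; have : 0 <= r + p <= 2^-1 by lra.
  move/(natr_exprn_half_lt1 _ _ m_ge3); rewrite ltNge (subrXX_eq_ge1 _ r m) //.
    by rewrite r_ge0 ltrDl.
  by rewrite -p_win addrC addKr.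
have : p <= (r + p) ^+ 2.
  apply: le_trans (_ : (r + p) ^+ m <= _).
    by rewrite [X in X <= _]p_win gerBl exprn_ge0.
  by apply: ler_wiXn2l; [lra|lra|lia].
rewrite expr2; nra.
Qed.

Lemma win_equations_r_sq : (3 <= m)%N -> 0 <= r -> 0 <= p -> 0 < s ->
  r + p + s = 1 -> s = (p + s) ^+ m - p ^+ m -> (m%:R - 2) * r ^+ 2 <= 3.
Proof.
move=> m_ge3 r_ge0 p_ge0 s_gt0 rps1 s_win.
apply: sqr_le_of_exprD1_le => //; apply: exprD1_le; first by lra.
rewrite (_ : 1 - r = p + s); last by lra.
apply: (subrXX_eq_ge1 _ p); first by rewrite p_ge0 ltrDl.
by rewrite -s_win addrC addKr.
Qed.

Lemma win_equations_bound : (3 <= m)%N -> 0 <= r -> 0 <= p -> 0 <= s ->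
  r + p + s = 1 -> s = (p + s) ^+ m - p ^+ m -> p = (r + p) ^+ m - r ^+ m ->
  (1 - Num.max r (Num.max p s)) ^+ 2 * (m%:R - 2) <= 27.
Proof.
move=> m_ge3 r_ge0 p_ge0 s_ge0 rps1 s_win p_win.
set M := Num.max _ _.
have [r_le p_le s_le] : [/\ r <= M, p <= M & s <= M] by rewrite !le_max !lexx !orbT.
have M_le1 : M <= 1 by rewrite !ge_max; apply/and3P; split; lra.
have degenerate : s = 0 \/ p = 0 -> (1 - M) ^+ 2 * (m%:R - 2) <= 27.
  have m_gt1 := ltnW m_ge3.
  move/(win_equations_degenerate m_gt1 r_ge0 s_ge0 rps1 s_win p_win) => one.
  suff -> : M = 1 by rewrite subrr expr0n mul0r.
  by apply/le_anti; rewrite M_le1; case: one => eq1; lra.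
have [s0|s_neq0] := eqVneq s 0; first by apply: degenerate; left.
have [p0|p_neq0] := eqVneq p 0; first by apply: degenerate; right.
have s_gt0 : 0 < s by rewrite lt_def s_neq0.
have p_gt0 : 0 < p by rewrite lt_def p_neq0.
have r_sq := win_equations_r_sq m_ge3 r_ge0 p_ge0 s_gt0 rps1 s_win.
have s_le_2r := win_equations_s_le_2r m_ge3 r_ge0 p_gt0 s_ge0 rps1 p_win.
have m_ge : 1 <= m%:R - 2 :> R by rewrite lerBrDr (_ : 1 + 2 = 3%:R) // ler_nat.
have : (1 - M) ^+ 2 <= 9 * r ^+ 2.
  have : 0 <= 1 - M <= 3 * r by apply/andP; split; lra.
  by move=> /andP[lo hi]; rewrite !expr2; nra.
nra.
Qed.

End WinEquations.

Lemma symNE_max_bound (R : realType) m (sg : 'I_3 -> R) : (3 <= m)%N ->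
  symNE m sg ->
  Num.max (sg obR) (Num.max (sg obP) (sg obS)) <= 1 /\
  (1 - Num.max (sg obR) (Num.max (sg obP) (sg obS))) ^+ 2 * (m%:R - 2) <= 27.
Proof.
move=> m_ge3 sgNE; have [[sg_ge0 sg_sum1] _] := sgNE.
have m_gt0 : (0 < m)%N by apply: leq_trans m_ge3.
rewrite sum_ord3 in sg_sum1.
have := sg_ge0 obR; have := sg_ge0 obP; have := sg_ge0 obS => s_ge0 p_ge0 r_ge0.
split; first by rewrite !ge_max; apply/and3P; split; lra.
apply: win_equations_bound => //.
  by rewrite -(win_probS m_gt0) (symNE_win_prob m_gt0).
by rewrite -(win_probP m_gt0) (symNE_win_prob m_gt0).
Qed.

Lemma cvg_to1_of_sqr_bound (R : realType) (u : nat -> R) (C : R) :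
  (forall n, (3 <= n)%N -> u n <= 1 /\ (1 - u n) ^+ 2 * (n%:R - 2) <= C) ->
  u @ \oo --> (1 : R).
Proof.
move=> bound; apply/cvgrPdist_lt => e e_gt0; near=> n.
have n_ge3 : (3 <= n)%N by near: n; exact: nbhs_infty_ge.
have n_large : C / e ^+ 2 + 3 <= n%:R by near: n; exact: nbhs_infty_ger.
have [u_le1 sqr_le] := bound n n_ge3.
rewrite ger0_norm ?subr_ge0 // ltNge; apply/negP => e_le.
have e2_gt0 : 0 < e ^+ 2 by rewrite exprn_gt0.
have n_ge : 1 <= n%:R - 2 :> R by rewrite lerBrDr (_ : 1 + 2 = 3%:R) // ler_nat.
have : e ^+ 2 * (n%:R - 2) <= C.
  apply: le_trans sqr_le; rewrite ler_wpM2r //; first by lra.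
  by rewrite !expr2; nra.
have : C / e ^+ 2 * e ^+ 2 = C by rewrite mulfVK ?gt_eqF.
nra.
Unshelve. all: end_near.
Qed.

Theorem mainTheorem3 (R : realType) (sigma : nat -> 'I_3 -> R) :
  (forall m : nat, (2 <= m)%N -> symNE m (sigma m)) ->
  (fun m : nat => Num.max (sigma m obR) (Num.max (sigma m obP) (sigma m obS)))
    @ \oo --> (1 : R).
Proof.
move=> sigmaNE; apply: (@cvg_to1_of_sqr_bound _ _ 27) => m m_ge3.
exact: symNE_max_bound m_ge3 (sigmaNE m (ltnW m_ge3)).
Qed.
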